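(* Let $X=V(f)\subset\mathbb{P}^n$, $f=\sum_{u\in\mathcal{A}}c_ux^u$, be an irreducible hypersurface, not a cone, with $\operatorname{trop}(X)$ smooth. Let $P$ be a cell of $\operatorname{trop}(X)$, let $\widehat P$ be the corresponding cell of $\operatorname{trop}(\widehat X)$, and let $\mathcal{A}_0=\mathcal{A}(p)$ for $p$ in the relative interior of $\widehat P$. Let $u\in\mathcal{A}\setminus\mathcal{A}_0$ be such that $\{u\}\cup\mathcal{A}_0$ spans a simplex of the triangulation, and let $Q$ be the corresponding facet of $P$, namely the intersection of the affine span of $P$ with the image in $\mathbb{R}^{n+1}/\mathbb{R}(1,\dots,1)$ of $\{q\in\mathbb{R}^{n+1}:\nu(c_u)-\langle q,u\rangle=\nu(c_v)-\langle q,v\rangle\}$ for $v\in\mathcal{A}_0$. Then for any $v\in\mathcal{A}_0$ and any $q$ in the affine span of $\widehat P$, $$\delta_Q(q)=\phi_q(u)-\phi_q(v),$$ where $\phi_q(w)=\nu(c_w)-\langle q,w\rangle$ and $\delta_Q(q)$ denotes the lattice distance from (the image of) $q$ to $Q$.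
   Context: $\mathbb{K}$ algebraically closed of characteristic zero with nontrivial non-Archimedean valuation $\nu$ trivial on integers. $\mathcal{A}\subset\mathbb{Z}^{n+1}$, $c_u\neq0$, $f$ homogeneous involving all variables. For $q\in\mathbb{R}^{n+1}$, $\mathcal{A}(q)$ is the set of $w\in\mathcal{A}$ minimizing $\nu(c_w)-\langle q,w\rangle$; $\operatorname{trop}(\widehat X)=\{q:\#\mathcal{A}(q)>1\}$, with cells determined by the value of $\mathcal{A}(q)$ (dual to the regular subdivision of $\operatorname{conv}\mathcal{A}$ given by the sets $\operatorname{conv}\mathcal{A}(q)$); $\operatorname{trop}(X)$ is its image in $\mathbb{R}^{n+1}/\mathbb{R}(1,\dots,1)\cong\mathbb{R}^n$ with the induced cells. Smooth: the subdivision is a unimodular triangulation. Lattice distance: for a rational polyhedron $P$ with facet $Q$, $v_Q$ is the primitive inward normal (primitive integral functional on the direction lattice of the affine span of $P$, vanishing on the directions of $Q$, positive towards $P$), and $\delta_Q(q)=\langle q-q',v_Q\rangle$ for any $q'\in Q$; it extends to the affine span of $P$. *)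

From HB Require Import structures.
From mathcomp Require Import all_boot all_order all_algebra.
From mathcomp Require Import mpoly.
Set Implicit Arguments. Unset Strict Implicit. Unset Printing Implicit Defensive.
Import Order.TTheory GRing.Theory Num.Theory.
Local Open Scope ring_scope.

Section Valuation.
Variables (K : fieldType) (R : realFieldType).

(* A (real-valued, non-Archimedean) valuation on K^*; the value nu 0 is
   irrelevant and never used. *)
Definition is_nonarch_valuation (nu : K -> R) : Prop :=
  (forall x y : K, x != 0 -> y != 0 -> nu (x * y) = nu x + nu y) /\
  (forall x y : K, x != 0 -> y != 0 -> x + y != 0 ->
      Num.min (nu x) (nu y) <= nu (x + y)).

Definition valuation_nontrivial (nu : K -> R) : Prop :=
  exists x : K, x != 0 /\ nu x != 0.

Definition valuation_trivial_on_integers (nu : K -> R) : Prop :=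
  forall k : nat, (0 < k)%N -> nu (k%:R) = 0.
End Valuation.

Section PolyHyps.
Variables (K : fieldType) (N : nat).

Definition mconstant (g : {mpoly K[N]}) : Prop := g = (g@_0%MM)%:MP.

Definition mirreducible (f : {mpoly K[N]}) : Prop :=
  ~ mconstant f /\
  forall g h : {mpoly K[N]}, f = g * h -> mconstant g \/ mconstant h.

Definition mhomogeneous (f : {mpoly K[N]}) : Prop :=
  exists d : nat, forall m, m \in msupp f -> mdeg m = d.

Definition involves_all_variables (f : {mpoly K[N]}) : Prop :=
  forall i : 'I_N, exists m, m \in msupp f /\ (0 < m i)%N.

(* V(f) in P^(N-1) is a cone: there is a vertex [p] such that the affine cone
   of V(f) is stable under translation along the line spanned by p. *)
Definition hypersurface_is_cone (f : {mpoly K[N]}) : Prop :=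
  exists p : 'I_N -> K, (exists i, p i != 0) /\
    forall (x : 'I_N -> K) (t : K),
      f.@[x] = 0 -> f.@[fun i => x i + t * p i] = 0.
End PolyHyps.

Section Trop.
Variables (K : fieldType) (R : realFieldType) (N : nat).
Variables (nu : K -> R) (f : {mpoly K[N]}).

Definition vec := 'I_N -> R.

Definition pairing (q : vec) (w : 'X_{1..N}) : R := \sum_i q i * (w i)%:R.

Definition phi (q : vec) (w : 'X_{1..N}) : R := nu (f@_w) - pairing q w.

Definition Amin (q : vec) : seq 'X_{1..N} :=
  [seq w <- msupp f | all (fun w' => phi q w <= phi q w') (msupp f)].

Definition in_trop_hat (q : vec) : Prop := (1 < size (Amin q))%N.

(* the closed cell of trop(\hat X) whose relative interior is {A(q) = A0} *)
Definition cell_hat (A0 : seq 'X_{1..N}) (q : vec) : Prop :=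
  {subset A0 <= Amin q}.

Definition intvec (z : 'I_N -> int) : vec := fun i => (z i)%:~R.

(* the vectors of vs are linearly independent and span a saturated
   sublattice of Z^N, i.e. they extend to a Z-basis of the lattice
   {x in Z^N | sum x = 0} *)
Definition unimodular_family (vs : seq ('I_N -> int)) : Prop :=
  (forall a : 'I_(size vs) -> R,
     (forall i, \sum_j a j * ((nth (fun=> 0) vs j) i)%:~R = 0) ->
     forall j, a j = 0) /\
  (forall (x : 'I_N -> int) (a : 'I_(size vs) -> R),
     (forall i, (x i)%:~R = \sum_j a j * ((nth (fun=> 0) vs j) i)%:~R) ->
     exists b : 'I_(size vs) -> int,
       forall i, x i = \sum_j b j * (nth (fun=> 0) vs j) i).

Definition diff_exps (w0 w : 'X_{1..N}) : 'I_N -> int :=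
  fun i => (w i)%:Z - (w0 i)%:Z.

(* every cell conv A(q) of the regular subdivision is a unimodular simplex
   with vertex set A(q) *)
Definition trop_smooth : Prop :=
  forall q : vec, match Amin q with
                  | [::] => True
                  | w0 :: rest => unimodular_family [seq diff_exps w0 w | w <- rest]
                  end.

Definition aff_hull (S : vec -> Prop) (q : vec) : Prop :=
  exists (k : nat) (pts : 'I_k -> vec) (lam : 'I_k -> R),
    (forall j, S (pts j)) /\ \sum_j lam j = 1 /\
    forall i, q i = \sum_j lam j * pts j i.

Definition aff_dir (S : vec -> Prop) (x : vec) : Prop :=
  exists a b, aff_hull S a /\ aff_hull S b /\ forall i, x i = a i - b i.

Definition dot (y x : vec) : R := \sum_i y i * x i.

(* y (restricted to the direction space of aff(Phat)) represents the
   primitive inward normal v_Q of the facet Q of P in R^N / R(1,...,1):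
   it descends to the quotient, is integral and primitive on the direction
   lattice, vanishes on the directions of Q and is nonnegative towards P. *)
Definition primitive_inward_normal (Phat Qhat : vec -> Prop) (y : vec) : Prop :=
  dot y (fun=> 1) = 0 /\
  (forall z : 'I_N -> int, aff_dir Phat (intvec z) ->
      exists k : int, dot y (intvec z) = k%:~R) /\
  (exists z : 'I_N -> int, aff_dir Phat (intvec z) /\ dot y (intvec z) = 1) /\
  (forall a b, Qhat a -> Qhat b -> dot y (fun i => a i - b i) = 0) /\
  (forall a b, Phat a -> Qhat b -> 0 <= dot y (fun i => a i - b i)).

(* the (lift to R^N of the affine span of the) facet Q of P determined by u *)
Definition facet_hat (A0 : seq 'X_{1..N}) (u : 'X_{1..N}) (q : vec) : Prop :=
  aff_hull (cell_hat A0) q /\ forall v, v \in A0 -> phi q u = phi q v.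

End Trop.

(* On the affine span of the cell all exponents of A0 tie, so
   q |-> phi_q(u) - phi_q(v) is affine there, vanishes on Q, and has linear
   part <., v - u>.  Smoothness makes u :: A0 the vertex set of a unimodular
   simplex, so some integral direction z of the cell has <z, v - u> = 1:
   thus v - u is itself a primitive inward normal of Q.  Any primitive inward
   normal y vanishes on the directions of Q, which form the kernel of
   <., v - u> among the directions of the cell, so y = c (v - u) there; by
   integrality, primitivity and positivity, c = 1. *)

From HB Require Import structures.
From mathcomp Require Import all_boot all_order all_algebra.
From mathcomp Require Import mpoly ring lra.
Import Order.TTheory GRing.Theory Num.Theory.
Set Implicit Arguments. Unset Strict Implicit. Unset Printing Implicit Defensive.
Local Open Scope ring_scope.

Lemma int_mul_eq1 (x y : int) : x * y = 1 -> (y == 1) || (y == -1).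
Proof. exact: intUnitRing.unitzPl. Qed.

Lemma int_sqr_eq1 (x y : int) : x * y = 1 -> y * y = 1.
Proof. by move/int_mul_eq1 => /orP[] /eqP->. Qed.

Lemma int_ge0_mul_eq1 (x y : int) : 0 <= y -> x * y = 1 -> y = 1.
Proof. by move=> y0 /int_mul_eq1 /orP[] /eqP // yN; rewrite yN in y0. Qed.

Section SmithRightInverse.
Variables (R : numFieldType) (k N : nat) (M : 'M[int]_(k, N)).
Local Notation realmx := (map_mx (intr : int -> R)).
Hypothesis M_free : forall a : 'rV[R]_k, a *m realmx M = 0 -> a = 0.
Hypothesis M_saturated : forall (x : 'rV[int]_N) (a : 'rV[R]_k),
  realmx x = a *m realmx M -> exists b : 'rV[int]_k, x = b *m M.

Variables (L : 'M[int]_k) (S : 'M[int]_N) (d : seq int).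
Hypotheses (L_unit : L \in unitmx) (S_unit : S \in unitmx).
Local Notation D := (\matrix_(i < k, j < N) (d`_i *+ (i == j :> nat))).
Hypothesis M_smith : M = L *m D *m S.

Lemma smith_row (i : 'I_k) : row i (invmx L) *m M = row i D *m S.
Proof. by rewrite -!row_mul M_smith !mulmxA mulVmx ?mul1mx. Qed.

Lemma smith_row_neq0 (i : 'I_k) : row i D != 0.
Proof.
apply/eqP => Di0.
have : realmx (row i (invmx L)) *m realmx M = 0.
  by rewrite -map_mxM smith_row Di0 mul0mx map_mx0.
move/M_free/matrixP => realLi0.
have Li0 : row i (invmx L) = 0.
  by apply/matrixP => a b; have /eqP := realLi0 a b; rewrite !mxE intr_eq0 => /eqP.
have := congr1 (mulmx^~ L) Li0.
rewrite -row_mul mulVmx // row1 mul0mx => /matrixP /(_ 0 i).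
by rewrite !mxE !eqxx /= => /eqP; rewrite oner_eq0.
Qed.

Lemma smith_row_delta (i : 'I_k) (j : 'I_N) :
  i = j :> nat -> row i D = d`_i *: delta_mx 0 j.
Proof.
move=> ij; apply/rowP => l; rewrite !mxE ij eqxx /= mulr_natr.
by rewrite (inj_eq val_inj) eq_sym.
Qed.

(* Saturation: row j of S is d_i^-1 times row i of L^-1 M, a real combination
   of the rows of M, hence an integral one b M = b L D S; its j-th coordinate
   reads (b L)_i d_i = 1. *)
Lemma smith_coef_sqr (i : 'I_k) (j : 'I_N) :
  i = j :> nat -> d`_i != 0 -> d`_i * d`_i = 1.
Proof.
move=> ij di0.
have Sj : realmx (row j S) =
    ((d`_i)%:~R^-1 *: realmx (row i (invmx L))) *m realmx M.
  rewrite -scalemxAl -map_mxM smith_row (smith_row_delta ij) -scalemxAl -rowE.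
  by rewrite map_mxZ scalerA mulVf ?scale1r // intr_eq0.
have [b /(congr1 (mulmx^~ (invmx S)))] := M_saturated Sj.
rewrite -row_mul mulmxV // row1 M_smith !mulmxA mulmxK //.
move/matrixP => /(_ 0 j); rewrite !mxE eqxx /= (bigD1 i) //= big1 => [|l li].
  by rewrite addr0 mxE -ij !eqxx mulr1n => /esym /int_sqr_eq1.
rewrite mxE; case: eqP => [lj|]; last by rewrite mulr0.
by case/eqP: li; apply: val_inj; rewrite /= lj ij.
Qed.

Lemma smith_diag_unit (i : 'I_k) : exists2 j : 'I_N, i = j :> nat & d`_i * d`_i = 1.
Proof.
have /existsP [j] : [exists j, D i j != 0].
  apply: contraR (smith_row_neq0 i); rewrite negb_exists => /forallP Di0.
  by apply/eqP/rowP => j; rewrite !mxE; apply/eqP; have := Di0 j; rewrite negbK mxE.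
rewrite mxE; have [ij|_] := eqVneq (i : nat) j; last by rewrite mulr0n eqxx.
by rewrite mulr1n => di0; exists j => //; apply: smith_coef_sqr ij di0.
Qed.

Lemma smith_diag_mul_tr : D *m D^T = 1%:M.
Proof.
apply/matrixP => a b; rewrite !mxE.
have [ja aj da] := smith_diag_unit a.
rewrite (bigD1 ja) //= big1 => [|j jn]; last first.
  by rewrite !mxE aj (inj_eq val_inj) eq_sym (negPf jn) mul0r.
rewrite !mxE -aj eqxx mulr1n addr0 (inj_eq val_inj) eq_sym.
have [<-|_] := eqVneq a b; first by rewrite mulr1n da.
by rewrite mulr0n mulr0.
Qed.

End SmithRightInverse.

Lemma int_mx_right_inverse (R : numFieldType) k N (M : 'M[int]_(k, N)) :
  (forall a : 'rV[R]_k, a *m map_mx intr M = 0 -> a = 0) ->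
  (forall (x : 'rV[int]_N) (a : 'rV[R]_k), map_mx intr x = a *m map_mx intr M ->
     exists b : 'rV[int]_k, x = b *m M) ->
  exists Z : 'M[int]_(N, k), M *m Z = 1%:M.
Proof.
move=> M_free M_sat.
have [L L_unit [S S_unit [d _ M_smith]]] := int_Smith_normal_form M.
set D := \matrix_(i, j) _ in M_smith.
exists (invmx S *m D^T *m invmx L).
rewrite M_smith !mulmxA mulmxK // -(mulmxA L).
by rewrite (smith_diag_mul_tr M_free M_sat L_unit S_unit M_smith) mulmx1 mulmxV.
Qed.

Lemma unimodular_family_solve (R : realFieldType) N (vs : seq ('I_N -> int)) :
  unimodular_family R vs -> forall e : 'I_(size vs) -> int,
  exists z : 'I_N -> int,
    forall j : 'I_(size vs), \sum_i nth (fun=> 0) vs j i * z i = e j.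
Proof.
case=> vs_free vs_sat e.
pose M : 'M[int]_(size vs, N) := \matrix_(j, i) nth (fun=> 0) vs j i.
have [Z MZ] : exists Z : 'M[int]_(N, size vs), M *m Z = 1%:M.
  apply: (int_mx_right_inverse (R := R)) => [a aM0 | x a xa].
    apply/rowP => j; rewrite mxE; apply: (vs_free (a 0)) => i.
    have /matrixP/(_ 0 i) := aM0; rewrite !mxE => aM0i; rewrite -[RHS]aM0i.
    by apply: eq_bigr => l _; rewrite !mxE.
  have [b xb] : exists b : 'I_(size vs) -> int,
      forall i, x 0 i = \sum_j b j * nth (fun=> 0) vs j i.
    apply: (vs_sat _ (a 0)) => i; have /matrixP/(_ 0 i) := xa; rewrite !mxE => ->.
    by apply: eq_bigr => l _; rewrite !mxE.
  exists (\row_j b j); apply/rowP => i; rewrite !mxE xb.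
  by apply: eq_bigr => l _; rewrite !mxE.
exists (fun i => (Z *m \col_j e j) i 0) => j.
have := congr1 (fun A : 'M[int]_(size vs, 1) => A j 0) (esym (mulmxA M Z (\col_j e j))).
rewrite MZ mul1mx !mxE => ->; apply: eq_bigr => l _; by rewrite !mxE.
Qed.

Section SmallPositive.
Variable R : realFieldType.

Lemma small_pos_mul_le (a b : R) : 0 < a ->
  exists2 e, 0 < e & forall t, 0 < t <= e -> t * b <= a.
Proof.
move=> a0; have b1 : 0 < `|b| + 1 by rewrite ltr_pwDr.
exists (a / (`|b| + 1)) => [|t /andP[t0 te]]; first exact: divr_gt0.
have := ler_norm b; have := normr_ge0 b.
move: te; rewrite ler_pdivlMr // => te; nra.
Qed.

Lemma small_pos_all (T : eqType) (s : seq T) (P : T -> R -> Prop) :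
  (forall w, w \in s -> exists2 e, 0 < e & forall t, 0 < t <= e -> P w t) ->
  exists2 e, 0 < e & forall t, 0 < t <= e -> forall w, w \in s -> P w t.
Proof.
elim: s => [|w s IHs] Ps; first by exists 1.
have [e1 e1_gt0 Pw] := Ps w (mem_head w s).
have [|e2 e2_gt0 Ps'] := IHs; first by move=> w' w's; apply: Ps; rewrite inE w's orbT.
exists (Num.min e1 e2) => [|t /andP[t0]]; first by rewrite lt_min e1_gt0.
rewrite le_min => /andP[te1 te2] w'; rewrite inE => /predU1P[->|].
  by apply: Pw; rewrite t0.
by apply: Ps'; rewrite t0.
Qed.

End SmallPositive.

Section Pairing.
Variables (R : realFieldType) (N : nat).
Implicit Types (a b x y : vec R N) (w : 'X_{1..N}).

Lemma eq_pairing a b w : a =1 b -> pairing a w = pairing b w.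
Proof. by move=> ab; apply: eq_bigr => i _; rewrite ab. Qed.

Lemma pairingDZ a b t w :
  pairing (fun i => a i + t * b i) w = pairing a w + t * pairing b w.
Proof.
rewrite /pairing mulr_sumr -big_split; apply: eq_bigr => i _.
by rewrite mulrDl mulrA.
Qed.

Lemma pairingD a b w : pairing (fun i => a i + b i) w = pairing a w + pairing b w.
Proof. by rewrite /pairing -big_split; apply: eq_bigr => i _; rewrite mulrDl. Qed.

Lemma pairingB a b w : pairing (fun i => a i - b i) w = pairing a w - pairing b w.
Proof. by rewrite /pairing -sumrB; apply: eq_bigr => i _; rewrite mulrBl. Qed.

Lemma pairing1 w : pairing (fun=> 1 : R) w = (mdeg w)%:R.
Proof. by rewrite /pairing mdegE natr_sum; apply: eq_bigr => i _; rewrite mul1r. Qed.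

Lemma eq_dot y a b : a =1 b -> dot y a = dot y b.
Proof. by move=> ab; apply: eq_bigr => i _; rewrite ab. Qed.

Lemma dotDZ y a b t : dot y (fun i => a i + t * b i) = dot y a + t * dot y b.
Proof.
rewrite /dot mulr_sumr -big_split; apply: eq_bigr => i _.
by rewrite mulrDr mulrCA.
Qed.

Lemma dot_intvec (c z : 'I_N -> int) :
  dot (intvec R c) (intvec R z) = (\sum_i c i * z i)%:~R.
Proof. by rewrite /dot rmorph_sum; apply: eq_bigr => i _; rewrite rmorphM. Qed.

Lemma dot_diff_exps w0 w x :
  dot (intvec R (diff_exps w0 w)) x = pairing x w - pairing x w0.
Proof.
rewrite /dot /pairing -sumrB; apply: eq_bigr => i _.
by rewrite /intvec /diff_exps intrB mulrBl !pmulrn mulrC [_ * x i]mulrC.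
Qed.

End Pairing.

Section AffineHull.
Variables (R : realFieldType) (N : nat) (S : vec R N -> Prop).

Lemma eq_aff_hull a b : a =1 b -> aff_hull S a -> aff_hull S b.
Proof.
move=> ab [k [pts [lam [S_pts [lam1 aE]]]]].
by exists k, pts, lam; do 2!split=> //; move=> i; rewrite -ab.
Qed.

Lemma aff_hull_self c : S c -> aff_hull S c.
Proof.
exists 1%N, (fun=> c), (fun=> 1); split=> //; split=> [|i]; first by rewrite big_ord1.
by rewrite big_ord1 mul1r.
Qed.

Lemma aff_hull_translate c a b t : S c -> S a -> S b ->
  aff_hull S (fun i => c i + t * (a i - b i)).
Proof.
move=> Sc Sa Sb; exists 3%N, (nth c [:: c; a; b]), (nth 0 [:: 1; t; - t]).
split; first by move=> [[|[|[|j]]] //].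
by split=> [|i]; rewrite !big_ord_recl big_ord0 /=; ring.
Qed.

End AffineHull.

Section Amin.
Variables (K : fieldType) (R : realFieldType) (N : nat) (nu : K -> R).
Variable f : {mpoly K[N]}.
Local Notation phi := (phi nu f).
Local Notation Amin := (Amin nu f).

Lemma phiDZ a b t w : phi (fun i => a i + t * b i) w = phi a w - t * pairing b w.
Proof. by rewrite /phi pairingDZ opprD addrA. Qed.

Lemma phi_aff_comb k (pts : 'I_k -> vec R N) lam q w : \sum_j lam j = 1 ->
  (forall i, q i = \sum_j lam j * pts j i) ->
  phi q w = \sum_j lam j * phi (pts j) w.
Proof.
move=> lam1 qE; rewrite /phi /pairing.
under [RHS]eq_bigr do rewrite mulrBr.
rewrite sumrB -mulr_suml lam1 mul1r; congr (_ - _).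
under eq_bigr do rewrite qE mulr_suml.
rewrite exchange_big; apply: eq_bigr => j _; rewrite mulr_sumr.
by apply: eq_bigr => i _; rewrite mulrA.
Qed.

Lemma phiD a b w : phi (fun i => a i + b i) w = phi a w - pairing b w.
Proof. by rewrite /phi pairingD opprD addrA. Qed.

Lemma Amin_supp q w : w \in Amin q -> w \in msupp f.
Proof. by rewrite mem_filter => /andP[]. Qed.

Lemma Amin_le q w w' : w \in Amin q -> w' \in msupp f -> phi q w <= phi q w'.
Proof. by rewrite mem_filter => /andP[/allP le_w _] /le_w. Qed.

Lemma Amin_tie q w w' : w \in Amin q -> w' \in Amin q -> phi q w = phi q w'.
Proof.
by move=> Aw Aw'; apply/le_anti; rewrite !Amin_le // (Amin_supp Aw, Amin_supp Aw').
Qed.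

Lemma Amin_lt q v w : v \in Amin q -> w \in msupp f -> w \notin Amin q ->
  phi q v < phi q w.
Proof.
move=> Av sw; rewrite mem_filter sw andbT => /allPn [w' sw'].
by rewrite -ltNge; apply: le_lt_trans (Amin_le Av sw').
Qed.

End Amin.

Section Cell.
Variables (K : fieldType) (R : realFieldType) (N : nat) (nu : K -> R).
Variables (f : {mpoly K[N]}) (p : vec R N) (v0 : 'X_{1..N}).
Hypothesis A0v0 : v0 \in Amin nu f p.
Local Notation phi := (phi nu f).
Local Notation A0 := (Amin nu f p).
Local Notation Phat := (cell_hat nu f A0).

Definition cell_dir (x : vec R N) : Prop :=
  forall w, w \in A0 -> pairing x w = pairing x v0.

Lemma aff_hull_tie q : aff_hull Phat q -> forall w, w \in A0 -> phi q w = phi q v0.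
Proof.
case=> k [pts [lam [Phat_pts [lam1 qE]]]] w A0w.
rewrite !(phi_aff_comb _ _ _ lam1 qE); apply: eq_bigr => j _.
by rewrite (Amin_tie (Phat_pts j w A0w) (Phat_pts j v0 A0v0)).
Qed.

Lemma aff_hull_sub_cell_dir a b : aff_hull Phat a -> aff_hull Phat b ->
  cell_dir (fun i => a i - b i).
Proof.
move=> /aff_hull_tie tie_a /aff_hull_tie tie_b w A0w; rewrite !pairingB.
by have := tie_a w A0w; have := tie_b w A0w; rewrite /phi; lra.
Qed.

Lemma aff_dir_cell_dir x : aff_dir Phat x -> cell_dir x.
Proof.
case=> a [b [hull_a [hull_b xE]]] w A0w.
rewrite !(eq_pairing _ xE); exact: aff_hull_sub_cell_dir.
Qed.

Lemma cell_dirDZ a b t : cell_dir a -> cell_dir b -> cell_dir (fun i => a i + t * b i).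
Proof. by move=> da db w A0w; rewrite !pairingDZ da ?db. Qed.

Lemma cell_hat_shift x : cell_dir x ->
  exists2 t, 0 < t & Phat (fun i => p i + t * x i).
Proof.
move=> dx.
have [|e e_gt0 small_e] := small_pos_all (s := msupp f)
    (P := fun w t => t * (pairing x w - pairing x v0) <= phi p w - phi p v0).
  move=> w sw; case: (boolP (w \in A0)) => A0w.
    by exists 1 => // t _; rewrite dx // (Amin_tie A0w A0v0) !subrr mulr0.
  by apply: small_pos_mul_le; rewrite subr_gt0 Amin_lt.
exists e => // w A0w; rewrite mem_filter (Amin_supp A0w) andbT.
apply/allP => w' sw'; rewrite !phiDZ (Amin_tie A0w A0v0) dx //.
by have := small_e e; rewrite e_gt0 lexx => /(_ isT w' sw'); lra.
Qed.

Lemma aff_hull_shift c x : Phat c -> cell_dir x -> aff_hull Phat (fun i => c i + x i).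
Proof.
move=> Phat_c dx; have [t t_gt0 Phat_pt] := cell_hat_shift dx.
apply: eq_aff_hull _ (aff_hull_translate t^-1 Phat_c Phat_pt (_ : Phat p)) => // i.
by field; rewrite gt_eqF.
Qed.

Lemma cell_dir_aff_dir x : cell_dir x -> aff_dir Phat x.
Proof.
move=> dx; exists (fun i => p i + x i), p.
by split; [exact: aff_hull_shift | split; [exact: aff_hull_self | move=> i; ring]].
Qed.

End Cell.

Lemma trop_smooth_interpolation (K : fieldType) (R : realFieldType) N
    (nu : K -> R) (f : {mpoly K[N]}) (q : vec R N) (h : 'X_{1..N} -> int) :
  trop_smooth nu f -> exists z : 'I_N -> int, forall w w',
    w \in Amin nu f q -> w' \in Amin nu f q ->
    pairing (intvec R z) w - (h w)%:~R = pairing (intvec R z) w' - (h w')%:~R.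
Proof.
move/(_ q); case: (Amin nu f q) => [|w0 ws] unimod; first by exists (fun=> 0).
have [z zE] := unimodular_family_solve unimod (fun j => h (nth w0 ws j) - h w0).
suff zw0 w : w \in w0 :: ws ->
    pairing (intvec R z) w - (h w)%:~R = pairing (intvec R z) w0 - (h w0)%:~R.
  by exists z => w w' /zw0 -> /zw0 ->.
rewrite inE => /predU1P[-> //|ws_w].
have j_lt : (index w ws < size [seq diff_exps w0 w | w <- ws])%N.
  by rewrite size_map index_mem.
have := zE (Ordinal j_lt); rewrite /= (nth_map w0) ?index_mem // nth_index // => wE.
have := dot_diff_exps w0 w (intvec R z); rewrite dot_intvec wE intrB; lra.
Qed.

Section Facet.
Variables (K : fieldType) (R : realFieldType) (N : nat) (nu : K -> R).
Variables (f : {mpoly K[N]}) (p q0 : vec R N) (u v0 : 'X_{1..N}).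
Hypotheses (A0v0 : v0 \in Amin nu f p) (supp_u : u \in msupp f).
Hypotheses (A0'u : u \notin Amin nu f p) (Amin_q0 : Amin nu f q0 =i u :: Amin nu f p).
Local Notation phi := (phi nu f).
Local Notation A0 := (Amin nu f p).
Local Notation Phat := (cell_hat nu f A0).
Local Notation Qhat := (facet_hat nu f A0 u).
Local Notation cell_dir := (cell_dir nu f p v0).
Local Notation facet_normal := (intvec R (diff_exps u v0)).

Lemma Amin_q0_u : u \in Amin nu f q0.
Proof. by rewrite Amin_q0 mem_head. Qed.

Lemma cell_hat_q0 : Phat q0.
Proof. by move=> w A0w; rewrite Amin_q0 inE A0w orbT. Qed.

Lemma facet_hat_q0 : Qhat q0.
Proof.
split=> [|v A0v]; first exact/aff_hull_self/cell_hat_q0.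
exact/Amin_tie/cell_hat_q0/A0v/Amin_q0_u.
Qed.

Lemma dot_facet_normalB a b : dot facet_normal (fun i => a i - b i) =
  (phi a u - phi a v0) - (phi b u - phi b v0).
Proof. by rewrite dot_diff_exps !pairingB /phi; ring. Qed.

Lemma A0_neq_u w : w \in A0 -> (w == u) = false.
Proof. by apply: contraTF => /eqP ->. Qed.

Lemma exists_unit_cell_dir : trop_smooth nu f ->
  exists z, cell_dir (intvec R z) /\ dot facet_normal (intvec R z) = 1.
Proof.
move=> /(trop_smooth_interpolation q0 (fun w => if w == u then -1 else 0)) [z zE].
have A0_q0 := cell_hat_q0.
exists z; split=> [w A0w|].
  have := zE w v0 (A0_q0 w A0w) (A0_q0 v0 A0v0).
  by rewrite !A0_neq_u // mulr0z !subr0.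
have := zE v0 u (A0_q0 v0 A0v0) Amin_q0_u.
by rewrite dot_diff_exps A0_neq_u // eqxx mulr0z mulrN1z; lra.
Qed.

Lemma facet_normal_primitive : mhomogeneous f -> trop_smooth nu f ->
  primitive_inward_normal Phat Qhat facet_normal.
Proof.
move=> [d deg_f] /exists_unit_cell_dir [z [dz nz1]].
split; [|split; [|split; [|split]]].
- by rewrite dot_diff_exps !pairing1 !deg_f ?subrr //; apply: Amin_supp A0v0.
- by move=> z' _; rewrite dot_intvec; eexists.
- exists z; split; [exact: (cell_dir_aff_dir A0v0) | exact: nz1].
- move=> a b [_ tie_a] [_ tie_b].
  by rewrite dot_facet_normalB (tie_a v0) ?(tie_b v0) // !subrr.
- move=> a b Phat_a [_ tie_b]; rewrite dot_facet_normalB (tie_b v0) // subrr subr0.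
  by rewrite subr_ge0 Amin_le ?Phat_a.
Qed.

(* x - <facet_normal, x> z is a direction of Q, on which y vanishes. *)
Lemma facet_normal_scale y z :
  cell_dir (intvec R z) -> dot facet_normal (intvec R z) = 1 ->
  (forall a b, Qhat a -> Qhat b -> dot y (fun i => a i - b i) = 0) ->
  forall x, cell_dir x -> dot y x = dot facet_normal x * dot y (intvec R z).
Proof.
move=> dz nz1 y_Q x dx.
pose x' i := x i + (- dot facet_normal x) * intvec R z i.
have dx' : cell_dir x' by apply: cell_dirDZ.
have nx'0 : dot facet_normal x' = 0 by rewrite dotDZ nz1; ring.
have Qhat_x' : Qhat (fun i => q0 i + x' i).
  split=> [|v A0v]; first exact: aff_hull_shift cell_hat_q0 dx'.
  rewrite !phiD (Amin_tie Amin_q0_u (cell_hat_q0 A0v)) (dx' v A0v).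
  by move: nx'0; rewrite dot_diff_exps; lra.
have := y_Q _ _ Qhat_x' facet_hat_q0.
rewrite (eq_dot _ (_ : _ =1 x')) => [|i]; last by ring.
by rewrite dotDZ; lra.
Qed.

(* c := dot y z is an integer by integrality of y, is nonnegative since y
   points towards P, and its product with the integer dot facet_normal z1 is
   dot y z1 = 1; hence c = 1. *)
Lemma primitive_inward_normal_unique y : trop_smooth nu f ->
  primitive_inward_normal Phat Qhat y ->
  forall x, cell_dir x -> dot y x = dot facet_normal x.
Proof.
move=> /exists_unit_cell_dir [z [dz nz1]].
move=> [_ [y_int [[z1 [dir_z1 yz1]] [y_Q y_PQ]]]].
have y_scale := facet_normal_scale dz nz1 y_Q.
suff yz1' : dot y (intvec R z) = 1 by move=> x /y_scale ->; rewrite yz1' mulr1.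
have [k yzk] := y_int z (cell_dir_aff_dir A0v0 dz).
have k_ge0 : 0 <= k.
  have Phat_p : Phat p by [].
  have := y_PQ _ _ Phat_p facet_hat_q0.
  rewrite y_scale; last first.
    exact: (aff_hull_sub_cell_dir A0v0)
      (aff_hull_self Phat_p) (aff_hull_self cell_hat_q0).
  rewrite yzk dot_facet_normalB (Amin_tie Amin_q0_u (cell_hat_q0 A0v0)) subrr subr0.
  by rewrite pmulr_rge0 ?ler0z // subr_gt0 (Amin_lt A0v0).
rewrite yzk; suff -> : k = 1 by [].
move: yz1; rewrite y_scale; last exact: aff_dir_cell_dir.
rewrite yzk dot_intvec -intrM => /eqP; rewrite (eqr_int _ _ 1) => /eqP.
exact: int_ge0_mul_eq1.
Qed.

Lemma primitive_inward_normal_dot y q q' v : trop_smooth nu f ->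
  primitive_inward_normal Phat Qhat y -> aff_hull Phat q -> Qhat q' -> v \in A0 ->
  dot y (fun i => q i - q' i) = phi q u - phi q v.
Proof.
move=> smooth y_normal hull_q [hull_q' tie_q'] A0v.
rewrite (primitive_inward_normal_unique smooth y_normal); last first.
  exact: (aff_hull_sub_cell_dir A0v0).
rewrite dot_facet_normalB (tie_q' v0 A0v0) subrr subr0.
by rewrite (aff_hull_tie A0v0 hull_q A0v).
Qed.

End Facet.

Theorem lemma5p3 (K : closedFieldType) (R : realFieldType) (n : nat)
  (nu : K -> R) (f : {mpoly K[n.+1]})
  (charK0 : [pchar K] =i pred0)
  (hnu : is_nonarch_valuation nu)
  (hnu_nontriv : valuation_nontrivial nu)
  (hnu_int : valuation_trivial_on_integers nu)
  (hhom : mhomogeneous f)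
  (hall : involves_all_variables f)
  (hirr : mirreducible f)
  (hcone : ~ hypersurface_is_cone f)
  (hsmooth : trop_smooth nu f)
  (p : 'I_n.+1 -> R) (hp : in_trop_hat nu f p)
  (u : 'X_{1..n.+1}) (hu : u \in msupp f) (huA0 : u \notin Amin nu f p)
  (hsimp : exists q0 : 'I_n.+1 -> R, Amin nu f q0 =i u :: Amin nu f p) :
  let A0 := Amin nu f p in
  let Phat := cell_hat nu f A0 in
  let Qhat := facet_hat nu f A0 u in
  (exists y, primitive_inward_normal Phat Qhat y) /\
  forall (v : 'X_{1..n.+1}) (q : 'I_n.+1 -> R),
    v \in A0 -> aff_hull Phat q ->
    forall (y q' : 'I_n.+1 -> R),
      primitive_inward_normal Phat Qhat y -> Qhat q' ->
      dot y (fun i => q i - q' i) = phi nu f q u - phi nu f q v.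
Proof.
rewrite /=.
have [v0 A0v0] : exists v0, v0 \in Amin nu f p.
  move: hp; rewrite /in_trop_hat; case: Amin => [|v0 ?] // _.
  by exists v0; rewrite mem_head.
have [q0 Amin_q0] := hsimp.
split; first by eexists; apply: facet_normal_primitive A0v0 hu huA0 Amin_q0 hhom hsmooth.
move=> v q A0v hull_q y q' y_normal Qhat_q'.
exact: (primitive_inward_normal_dot A0v0 hu huA0 Amin_q0 hsmooth y_normal).
Qed.
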